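(* Let $\mathbf{A}$ be an $n\times n$ repeated-row matrix of type $\mathbf{m}=(m_1,\dots,m_t)$ with rows $\mathbf{a}_1,\dots,\mathbf{a}_t$, and let $\mu$ be the sum-product flow on $\mathcal{T}(\mathbf{A},\mathbf{m})$. For every vertex $\boldsymbol\lambda\ne\mathbf{0}$, let $j=\lambda_1+\dots+\lambda_t$, let $\mathbf{c}_\ell=(a_{\ell1},\dots,a_{\ell j})$ for $\ell\in[t]$, and let $\mathbf{C}(\boldsymbol\lambda)$ be the $j\times j$ matrix whose rows are $\mathbf{c}_1$ repeated $\lambda_1$ times, $\mathbf{c}_2$ repeated $\lambda_2$ times, …, $\mathbf{c}_t$ repeated $\lambda_t$ times. Then $$\mathrm{per}(\mathbf{C}(\boldsymbol\lambda))=\lambda_1!\lambda_2!\cdots\lambda_t!\,\mu(\boldsymbol\lambda).$$ In particular $\mathrm{per}(\mathbf{A})=m_1!m_2!\cdots m_t!\,\mu(\mathrm{toor})$.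
   Context: $\mathrm{per}(\mathbf{B})=\sum_{\boldsymbol\sigma\in\mathbb{S}_k}\prod_i b_{i\sigma_i}$ for a $k\times k$ matrix (invariant under row permutations). An $n\times n$ matrix $\mathbf{A}$ is a repeated-row matrix of type $\mathbf{m}=(m_1,\dots,m_t)$ (positive integers with $\sum m_\ell=n$) with rows $\mathbf{a}_1,\dots,\mathbf{a}_t$, $\mathbf{a}_\ell=(a_{\ell1},\dots,a_{\ell n})$, if its rows consist of $\mathbf{a}_\ell$ repeated exactly $m_\ell$ times for each $\ell$. The trellis $\mathcal{T}(\mathbf{A},\mathbf{m})$: vertices are integer tuples $\boldsymbol\lambda=(\lambda_1,\dots,\lambda_t)$ with $0\le\lambda_\ell\le m_\ell$; layer $V_j$ consists of those with $\sum_\ell\lambda_\ell=j$ (root $\mathbf{0}$, toor $\mathbf{m}$); for $j\in[n]$, $(\boldsymbol\mu,\boldsymbol\lambda)\in V_{j-1}\times V_j$ is an edge iff there is a unique $\ell^*$ with $\lambda_{\ell^*}=\mu_{\ell^*}+1$ and $\lambda_\ell=\mu_\ell$ for $\ell\ne\ell^*$; its label is $a_{\ell^* j}$. The sum-product flow: $\mu(\mathrm{root})=1$ and $\mu(v)=\sum_{(u,v)\in E}L(u,v)\mu(u)$ layer by layer. *)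

From mathcomp Require Import all_boot all_order all_algebra all_fingroup.
Set Implicit Arguments. Unset Strict Implicit. Unset Printing Implicit Defensive.
Import GRing.Theory.
Local Open Scope ring_scope.

Definition per (R : comNzRingType) (k : nat) (B : 'M[R]_k) : R :=
  \sum_(s : 'S_k) \prod_(i < k) B i (s i).

(* Entry a_{l c} of the row a_l, columns 0-indexed (column c <-> paper's c+1);
   out-of-range columns give 0 (never used). *)
Definition aent (R : comNzRingType) (t n : nat) (a : 'M[R]_(t, n))
  (l : 'I_t) (c : nat) : R :=
  match insub c with Some k => a l k | None => 0 end.

Definition repeated_row (R : comNzRingType) (t n : nat) (A : 'M[R]_n)
  (m : 'I_t -> nat) (a : 'M[R]_(t, n)) : Prop :=
  exists f : 'I_n -> 'I_t,
    (forall i : 'I_n, row i A = row (f i) a) /\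
    (forall l : 'I_t, #|[set i | f i == l]| = m l).

(* Sum-product flow on the trellis T(A, m), computed layer by layer.
   flow_aux j lam is mu(lam) for a vertex lam in layer V_j: the edges into lam
   come from lam - e_l (for each l with lam_l >= 1, the unique l* of the edge),
   with label a_{l*, j} (paper's 1-indexed column j = 0-indexed column j-1). *)
Fixpoint flow_aux (R : comNzRingType) (t n : nat) (a : 'M[R]_(t, n))
  (j : nat) (lam : 'I_t -> nat) : R :=
  match j with
  | 0 => 1
  | j'.+1 => \sum_(l : 'I_t | (0 < lam l)%N)
               aent a l j' * flow_aux a j' (fun k => if k == l then (lam k).-1 else lam k)
  end.

Definition flow (R : comNzRingType) (t n : nat) (a : 'M[R]_(t, n))
  (lam : 'I_t -> nat) : R :=
  flow_aux a (\sum_(l < t) lam l) lam.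

Definition row_labels (t : nat) (lam : 'I_t -> nat) : seq 'I_t :=
  flatten [seq nseq (lam l) l | l <- enum 'I_t].

Definition Cmat (R : comNzRingType) (t n : nat) (a : 'M[R]_(t, n))
  (lam : 'I_t -> nat) : 'M[R]_(\sum_(l < t) lam l) :=
  \matrix_(i, k) nth 0 [seq aent a l k | l <- row_labels lam] i.

From mathcomp Require Import all_boot all_order all_algebra all_fingroup.
From mathcomp Require Import ring.
Set Implicit Arguments. Unset Strict Implicit. Unset Printing Implicit Defensive.
Import GRing.Theory.
Local Open Scope ring_scope.

(* Describe a j x j matrix whose i-th row consists of the first
   j entries of the row a_(lab i) of a by a labelling lab : 'I_j -> 'I_t,
   and write label_per lab for its permanent.  Expanding the permanent
   along its last column (column j) gives
     label_per lab = \sum_i a_(lab i, j) * label_per (lab without row i).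
   Rows with the same label contribute the same term, so grouping the sum by
   labels turns it into the recursion defining the sum-product flow, up to
   the factor (multiplicity of l) that exactly accounts for the passage from
   (lam_l - 1)! to lam_l!.  Induction on j then gives
     label_per lab = (\prod_l lam_l!) * mu(lam),   lam = multiplicities of lab.
   Both C(lam) (labelled by row_labels lam) and the repeated-row matrix A
   (labelled by the map f of repeated_row) are instances of this identity. *)

(* Summing over the permutations mapping i to k amounts to summing over the
   permutations of the remaining n points: s |-> lift_perm i k s is a
   bijection onto that set. *)
Lemma sum_perm_fixing (V : nmodType) (n : nat) (i k : 'I_n.+1)
    (F : 'S_n.+1 -> V) :
  \sum_(s : 'S_n.+1 | s i == k) F s = \sum_(s : 'S_n) F (lift_perm i k s).
Proof.
rewrite (reindex (lift_perm i k)) /=; last first.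
  pose restr (s : 'S_n.+1) x := odflt x (unlift k (s (lift i x))).
  have restrK (s : 'S_n.+1) x : s i = k -> lift k (restr s x) = s (lift i x).
    move=> sik; rewrite /restr; have := neq_lift i x.
    by rewrite -(can_eq (permK s)) sik => /unlift_some[] ? ? ->.
  have restr_inj (s : 'S_n.+1) : s i = k -> injective (restr s).
    move=> sik x y /(congr1 (lift k)); rewrite !restrK //.
    by move/perm_inj/lift_inj.
  exists (fun s : 'S_n.+1 => if s i =P k is ReflectT sik then perm (restr_inj s sik) else 1%g).
    move=> s _; case: eqP => [sik|]; last by rewrite lift_perm_id.
    by apply/permP => x; rewrite permE /restr lift_perm_lift liftK.
  move=> s /eqP sik; case: eqP => // sik'; apply/permP => x.
  case: (unliftP i x) => [x'|] ->; first by rewrite lift_perm_lift permE restrK.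
  by rewrite lift_perm_id.
by apply: eq_bigl => s; rewrite lift_perm_id eqxx.
Qed.

Section LabelledPermanent.
Variables (R : comNzRingType) (t n : nat) (a : 'M[R]_(t, n)).

Definition label_per (j : nat) (lab : 'I_j -> 'I_t) : R :=
  \sum_(s : 'S_j) \prod_(i < j) aent a (lab i) (s i).

Definition multiplicity (j : nat) (lab : 'I_j -> 'I_t) (l : 'I_t) : nat :=
  (\sum_(i < j) (lab i == l))%N.

Lemma sum_multiplicity (j : nat) (lab : 'I_j -> 'I_t) :
  (\sum_l multiplicity lab l)%N = j.
Proof.
rewrite /multiplicity exchange_big /= -[RHS]card_ord -sum1_card.
apply: eq_bigr => i _; rewrite (bigD1 (lab i)) //= eqxx big1 // => l.
by rewrite eq_sym => /negbTE ->.
Qed.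

Lemma flow_aux_S (j : nat) (lam : 'I_t -> nat) :
  flow_aux a j.+1 lam =
  \sum_(l < t | (0 < lam l)%N)
     aent a l j * flow_aux a j (fun k => if k == l then (lam k).-1 else lam k).
Proof. by []. Qed.

Lemma flow_aux_ext (j : nat) (lam lam' : 'I_t -> nat) :
  lam =1 lam' -> flow_aux a j lam = flow_aux a j lam'.
Proof.
elim: j lam lam' => [//|j IH] lam lam' eq_lam /=.
apply: eq_big => [l|l _]; first by rewrite eq_lam.
by congr (_ * _); apply: IH => k; rewrite !eq_lam.
Qed.

Lemma multiplicity_delete (j : nat) (lab : 'I_j.+1 -> 'I_t) (i : 'I_j.+1) :
  multiplicity (fun k => lab (lift i k)) =1
  (fun l => if l == lab i then (multiplicity lab l).-1 else multiplicity lab l).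
Proof.
move=> l; rewrite /multiplicity (bigD1_ord i) //=.
by case: eqP => [->|/eqP]; rewrite ?eqxx // eq_sym => /negbTE ->.
Qed.

Lemma label_per_expand (j : nat) (lab : 'I_j.+1 -> 'I_t) :
  label_per lab =
  \sum_(i < j.+1) aent a (lab i) j * label_per (fun k => lab (lift i k)).
Proof.
have split_last (s : 'S_j.+1) : \prod_(k < j.+1) aent a (lab k) (s k) =
    \sum_(i < j.+1 | s i == ord_max) \prod_(k < j.+1) aent a (lab k) (s k).
  rewrite [RHS](big_pred1 (s^-1 ord_max)%g) // => i /=.
  by apply/eqP/eqP => [<-|->]; rewrite ?permK ?permKV.
rewrite /label_per (eq_bigr _ (fun s _ => split_last s)).
rewrite (exchange_big_dep predT) //=.
apply: eq_bigr => i _; rewrite sum_perm_fixing mulr_sumr.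
apply: eq_bigr => s _; rewrite (bigD1_ord i) //= lift_perm_id.
by congr (_ * _); apply: eq_bigr => k _; rewrite lift_perm_lift lift_max.
Qed.

Lemma sum_by_label (j : nat) (lab : 'I_j -> 'I_t) (G : 'I_t -> R) :
  \sum_(i < j) G (lab i) = \sum_l (multiplicity lab l)%:R * G l.
Proof.
rewrite (partition_big lab predT) //=; apply: eq_bigr => l _.
rewrite /multiplicity natr_sum mulr_suml big_mkcond /=; apply: eq_bigr => i _.
by case: eqP => [->|]; rewrite ?mul1r ?mul0r.
Qed.

Lemma label_per_flow (j : nat) (lab : 'I_j -> 'I_t) :
  label_per lab =
  (\prod_l (multiplicity lab l)`!)%:R * flow_aux a j (multiplicity lab).
Proof.
elim: j lab => [|j IH] lab.
  have empty_prod (s : 'S_0) : \prod_(i < 0) aent a (lab i) (s i) = 1.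
    by rewrite big_ord0.
  rewrite /label_per (eq_bigr _ (fun s _ => empty_prod s)) sumr_const card_Sn /=.
  by rewrite big1 ?mul1r // => l _; rewrite /multiplicity big_ord0.
set lam := multiplicity lab.
pose dec l k := if k == l then (lam k).-1 else lam k.
pose G l := aent a l j * ((\prod_k (dec l k)`!)%:R * flow_aux a j (dec l)).
have -> : label_per lab = \sum_(i < j.+1) G (lab i).
  rewrite label_per_expand; apply: eq_bigr => i _.
  rewrite IH (flow_aux_ext _ (multiplicity_delete lab i)); congr (_ * (_%:R * _)).
  by apply: eq_bigr => l _; rewrite multiplicity_delete.
rewrite sum_by_label flow_aux_S mulr_sumr [RHS]big_mkcond; apply: eq_bigr => l _.
rewrite -/lam; case lam_l: (lam l) => [|c] /=; first by rewrite mul0r.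
have fact_dec : (\prod_k (lam k)`! = c.+1 * \prod_k (dec l k)`!)%N.
  rewrite (bigD1 l) // [in RHS](bigD1 l) //= /dec eqxx lam_l factS mulnA.
  by congr (_ * _)%N; apply: eq_bigr => k /negbTE ->.
by rewrite /G fact_dec natrM; ring.
Qed.

Lemma per_labelled (j : nat) (B : 'M[R]_j) (lab : 'I_j -> 'I_t)
    (lam : 'I_t -> nat) :
  (forall i k : 'I_j, B i k = aent a (lab i) k) ->
  multiplicity lab =1 lam ->
  per B = (\prod_l (lam l)`!)%:R * flow a lam.
Proof.
move=> B_rows mult_lam.
have -> : per B = label_per lab.
  by apply: eq_bigr => s _; apply: eq_bigr => i _; rewrite B_rows.
have sum_lam : (\sum_l lam l)%N = j.
  by rewrite -(eq_bigr _ (fun l _ => mult_lam l)) sum_multiplicity.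
rewrite label_per_flow /flow sum_lam (flow_aux_ext _ mult_lam).
by congr (_%:R * _); apply: eq_bigr => l _; rewrite mult_lam.
Qed.

End LabelledPermanent.

Lemma size_row_labels (t : nat) (lam : 'I_t -> nat) :
  size (row_labels lam) = (\sum_l lam l)%N.
Proof.
rewrite /row_labels size_flatten /shape -map_comp sumnE big_map big_enum.
by apply: eq_bigr => l _; rewrite /= size_nseq.
Qed.

Lemma count_row_labels (t : nat) (lam : 'I_t -> nat) (l : 'I_t) :
  count (pred1 l) (row_labels lam) = lam l.
Proof.
rewrite /row_labels count_flatten -map_comp sumnE big_map big_enum.
rewrite (bigD1 l) //= count_nseq /= eqxx mul1n big1 ?addn0 //.
by move=> k /negbTE; rewrite /= count_nseq /= eq_sym => ->.
Qed.

Lemma multiplicity_row_labels (t : nat) (lam : 'I_t -> nat) (l0 : 'I_t) :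
  multiplicity (fun i : 'I_(\sum_l lam l) => nth l0 (row_labels lam) i) =1 lam.
Proof.
move=> l; rewrite /multiplicity -count_row_labels -sum1_count.
rewrite [RHS](big_nth l0) size_row_labels big_mkord [RHS]big_mkcond.
by apply: eq_bigr => i _ /=; case: eqP.
Qed.

Theorem theorem5 (R : comNzRingType) (n t : nat) (m : 'I_t -> nat)
  (a : 'M[R]_(t, n)) (A : 'M[R]_n) :
  (forall l : 'I_t, (0 < m l)%N) ->
  (\sum_(l < t) m l)%N = n ->
  repeated_row A m a ->
  (forall lam : 'I_t -> nat,
     (forall l : 'I_t, (lam l <= m l)%N) ->
     (exists l : 'I_t, lam l != 0%N) ->
     per (Cmat a lam) = (\prod_(l < t) (lam l)`!)%:R * flow a lam)
  /\ per A = (\prod_(l < t) (m l)`!)%:R * flow a m.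
Proof.
move=> _ _ [f [A_rows card_f]]; split.
  move=> lam _ [l0 _]; apply: per_labelled (multiplicity_row_labels lam l0).
  by move=> i k; rewrite mxE (nth_map l0) // size_row_labels.
apply: (per_labelled (lab := f)).
  move=> i k; have := congr1 (fun r : 'rV_n => r 0 k) (A_rows i).
  by rewrite !mxE /aent valK.
move=> l; rewrite -card_f -sum1_card /multiplicity [RHS]big_mkcond /=.
by apply: eq_bigr => i _; rewrite inE; case: (f i == l).
Qed.
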